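(* Let $q\ge2$ and let $U_C$ be the operator on $\mathbb{C}^q\otimes\mathbb{C}^q$ with matrix elements $$\langle k\alpha|U_C|j\beta\rangle=\frac1q\exp\!\Bigl(-\frac{2\pi i}{q}\bigl[k\alpha+2j\beta-(k\beta+j\alpha)\bigr]\Bigr),\qquad k,\alpha,j,\beta\in\{0,\dots,q-1\}.$$ Then $U_C$ is unitary and dual-unitary for every $q$. If $q$ is odd, $U_C$ is 2-unitary, so $e_p(U_C)=1$ and all nontrivial eigenvalues of $\mathcal{M}_\pm^{U_C}$ vanish. If $q$ is even, $U_C$ is not 2-unitary and $e_p(U_C)=\frac{q^2-2}{q^2-1}$.
   Context: Product basis $|i\alpha\rangle$ of $\mathbb{C}^q\otimes\mathbb{C}^q$. Realignment $\langle\beta\alpha|X^{R_1}|ji\rangle=\langle i\alpha|X|j\beta\rangle$, partial transpose $\langle i\beta|X^{T_2}|j\alpha\rangle=\langle i\alpha|X|j\beta\rangle$. A unitary $U$ is dual-unitary if $U^{R_1}$ is unitary and 2-unitary if both $U^{R_1}$ and $U^{T_2}$ are unitary. $S$ is the swap. $E(U)=1-q^{-4}\operatorname{tr}[(U^{R_1}U^{R_1\dagger})^2]$, $E(S)=1-1/q^2$, $e_p(U)=\frac{E(U)+E(US)-E(S)}{E(S)}$. $\mathcal{M}_+^U(a)=\frac1q\operatorname{tr}_1[U^\dagger(a\otimes I)U]$, $\mathcal{M}_-^U(a)=\frac1q\operatorname{tr}_2[U^\dagger(I\otimes a)U]$ on $q\times q$ matrices; their nontrivial eigenvalues are the eigenvalues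 of their restrictions to traceless matrices. *)

From HB Require Import structures.
From mathcomp Require Import all_boot all_order all_algebra.
From mathcomp Require Import complex.
From mathcomp Require Import all_classical all_reals all_analysis.
Set Implicit Arguments. Unset Strict Implicit. Unset Printing Implicit Defensive.
Import Order.TTheory GRing.Theory Num.Theory.
Local Open Scope ring_scope.
Local Open Scope complex_scope.

(* Complex numbers: C = R[i] over an arbitrary realType R.
   The space C^q (x) C^q is modelled by 'cV_(q*q); the product basis vector
   |i alpha> is the index  idx i alpha := mxvec_index i alpha. *)

Section Q.
Variables (R : realType) (q : nat).
Local Notation C := R[i].
Local Notation Mq := 'M[C]_(q * q).

Definition idx (i a : 'I_q) : 'I_(q * q) := mxvec_index i a.

Definition pair_of (x : 'I_(q * q)) : 'I_q * 'I_q :=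
  enum_val (cast_ord (esym (mxvec_cast q q)) x).

Definition mx4 (f : 'I_q -> 'I_q -> 'I_q -> 'I_q -> C) : Mq :=
  \matrix_(x, y) f (pair_of x).1 (pair_of x).2 (pair_of y).1 (pair_of y).2.

Definition adj m n (A : 'M[C]_(m, n)) : 'M[C]_(n, m) := (map_mx conjc A)^T.

Definition unitary n (A : 'M[C]_n) : Prop :=
  A *m adj A = 1%:M /\ adj A *m A = 1%:M.

Definition realign (X : Mq) : Mq :=
  mx4 (fun b a j i => X (idx i a) (idx j b)).

Definition ptrans2 (X : Mq) : Mq :=
  mx4 (fun i b j a => X (idx i a) (idx j b)).

Definition dual_unitary (U : Mq) : Prop := unitary U /\ unitary (realign U).
Definition two_unitary (U : Mq) : Prop :=
  unitary U /\ unitary (realign U) /\ unitary (ptrans2 U).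

Definition swap : Mq := mx4 (fun i a j b => ((i == b) && (a == j))%:R).

Definition Ent (U : Mq) : C :=
  1 - (q%:R ^- 4) * \tr ((realign U *m adj (realign U)) ^+ 2).

Definition e_p (U : Mq) : C :=
  (Ent U + Ent (U *m swap) - Ent swap) / Ent swap.

Definition tensorI (a : 'M[C]_q) : Mq :=
  mx4 (fun i al j be => a i j * (al == be)%:R).
Definition Itensor (a : 'M[C]_q) : Mq :=
  mx4 (fun i al j be => (i == j)%:R * a al be).

Definition ptr1 (X : Mq) : 'M[C]_q :=
  \matrix_(al, be) \sum_(i < q) X (idx i al) (idx i be).
Definition ptr2 (X : Mq) : 'M[C]_q :=
  \matrix_(i, j) \sum_(al < q) X (idx i al) (idx j al).

Definition Mplus (U : Mq) (a : 'M[C]_q) : 'M[C]_q :=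
  q%:R^-1 *: ptr1 (adj U *m tensorI a *m U).
Definition Mminus (U : Mq) (a : 'M[C]_q) : 'M[C]_q :=
  q%:R^-1 *: ptr2 (adj U *m Itensor a *m U).

(* lambda is an eigenvalue of the restriction of M to traceless matrices *)
Definition nontriv_eigenvalue (M : 'M[C]_q -> 'M[C]_q) (lam : C) : Prop :=
  exists a : 'M[C]_q, [/\ a != 0, \tr a = 0 & M a = lam *: a].

Definition expi (t : R) : C := cos t +i* sin t.

Definition U_C : Mq :=
  mx4 (fun k al j be =>
    q%:R^-1 * expi (- (2 * pi / q%:R) *
      ((k * al + 2 * j * be)%:R - (k * be + j * al)%:R))).

End Q.

From HB Require Import structures.
From mathcomp Require Import all_boot all_order all_algebra.
From mathcomp Require Import complex.
From mathcomp Require Import all_classical all_reals all_analysis.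
From mathcomp Require Import zify ring lra.
Set Implicit Arguments. Unset Strict Implicit. Unset Printing Implicit Defensive.
Import Order.TTheory GRing.Theory Num.Theory.
Local Open Scope ring_scope.
Local Open Scope complex_scope.

(* Up to the factor 1/q, every matrix element of U_C, of its realignment, of
   its partial transpose and of (U_C S)^R1 is a power of the primitive q-th
   root of unity zeta = exp(-2 pi i / q), with an exponent that is bilinear in
   the indices. Each row Gram sum is therefore a double character sum over
   Z/q, i.e. a product of two Kronecker deltas modulo q. For U_C and U_C^R1
   the deltas pin the row indices because (u, v) |-> (2u - v, v - u) is
   unimodular; for U_C^T2 one of them is delta(2 (b - b')), which pins b only
   when 2 is invertible modulo q, i.e. when q is odd. In the same way
   tr((R R^+)^2) for R = (U_C S)^R1 counts the gcd(2, q) solutions of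
   2 k = 2 b mod q, whence e_p(U_C) = (q^2 - gcd(2, q)) / (q^2 - 1). Finally,
   when U^T2 is unitary the partial traces defining M_+ and M_- collapse to
   tr(a) times the identity, so both maps kill traceless matrices. *)

Definition delta_mod (F : pzSemiRingType) (d : nat) (m : int) : F :=
  ((d%:Z %| m)%Z)%:R.
Arguments delta_mod {F}.

Lemma dvdz_double (q : nat) (y : int) :
  (q%:Z %| 2 * y)%Z = ((q %/ gcdn 2 q)%:Z %| y)%Z.
Proof.
have [q_odd|q_even] := boolP (odd q).
  move: (q_odd); rewrite -coprime2n => /eqP ->; rewrite divn1.
  by rewrite Gauss_dvdzr // coprimezE /= coprimen2.
have /gcdn_idPl -> : (2 %| q)%N by rewrite dvdn2.
by rewrite -[in LHS](divnK (_ : 2 %| q)%N) ?dvdn2 // PoszM [2 * y]mulrC dvdz_mul2r.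
Qed.

Lemma dvdz_ord_sub q (a b : 'I_q) : (q%:Z %| a%:Z - b%:Z)%Z = (a == b).
Proof. by rewrite -eqz_mod_dvd !modz_small /= ?ltz_nat. Qed.

Lemma dvdz_unimodular (d u v : int) :
  (d %| 2 * u - v)%Z && (d %| v - u)%Z = (d %| u)%Z && (d %| v)%Z.
Proof.
apply/andP/andP => -[du dv]; split.
- have -> : u = (2 * u - v) + (v - u) by ring.
  exact: rpredD.
- have -> : v = (2 * u - v) + 2 * (v - u) by ring.
  by rewrite rpredD ?dvdz_mull.
- by rewrite rpredB // dvdz_mull.
- by rewrite rpredB.
Qed.

Section DeltaMod.
Variable F : pzSemiRingType.

Lemma sum_kron (I : finType) (f : I -> F) (i0 : I) :
  \sum_i (i0 == i)%:R * f i = f i0.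
Proof.
rewrite (bigD1 i0) //= eqxx mul1r big1 ?addr0 // => i /negbTE.
by rewrite eq_sym => ->; rewrite mul0r.
Qed.

Lemma delta_modN d m : delta_mod d (- m) = delta_mod d m :> F.
Proof. by rewrite /delta_mod rpredN. Qed.

Lemma delta_mod_ord q (a b : 'I_q) : delta_mod q (a%:Z - b%:Z) = (a == b)%:R :> F.
Proof. by rewrite /delta_mod dvdz_ord_sub. Qed.

Lemma sum_delta_mod_sub (d : nat) (c : int) : (0 < d)%N ->
  \sum_(k < d) delta_mod d (c - k%:Z) = 1 :> F.
Proof.
move=> d_gt0; have r_lt : (`|(c %% d)%Z|%N < d)%N.
  by rewrite -ltz_nat gez0_abs ?modz_ge0 ?ltz_pmod // -lt0n.
rewrite -[RHS](sum_kron (fun=> 1) (Ordinal r_lt)); apply: eq_bigr => k _.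
rewrite mulr1 /delta_mod -eqz_mod_dvd [(k%:Z %% d)%Z]modz_small /= ?ltz_nat //.
by rewrite -(inj_eq val_inj) /= -eqz_nat gez0_abs // modz_ge0 // -lt0n.
Qed.

Lemma sum_delta_mod_sub_mul (d n : nat) (c : int) : (0 < d)%N ->
  \sum_(k < n * d) delta_mod d (c - k%:Z) = n%:R :> F.
Proof.
move=> d_gt0; elim: n c => [|n IHn] c; first by rewrite big_ord0.
rewrite mulSn big_split_ord /= sum_delta_mod_sub //.
rewrite -natr1 -(IHn (c - d%:Z)) addrC; congr (_ + _).
by apply: eq_bigr => k _; rewrite PoszD opprD addrA.
Qed.

End DeltaMod.

Lemma sum_delta_mod_double_sub (F : pzSemiRingType) (q : nat) (b : int) :
  (0 < q)%N -> \sum_(k < q) delta_mod q (2 * (b - k%:Z)) = (gcdn 2 q)%:R :> F.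
Proof.
move=> q_gt0; have g_dvd : (gcdn 2 q %| q)%N := dvdn_gcdr 2 q.
have d_gt0 : (0 < q %/ gcdn 2 q)%N.
  by rewrite divn_gt0 ?gcdn_gt0 ?q_gt0 ?orbT // dvdn_leq.
have := sum_delta_mod_sub_mul F (gcdn 2 q) b d_gt0.
rewrite mulnC divnK // => <-; apply: eq_bigr => k _.
by rewrite /delta_mod dvdz_double.
Qed.

Lemma sqrn_sub1_neq0 (F : numDomainType) (q : nat) :
  (1 < q)%N -> (q ^ 2)%:R - 1 != 0 :> F.
Proof. by move=> q_gt1; rewrite subr_eq0 pnatr_eq1 expnS expn1; apply/eqP; nia. Qed.

Section PrimitiveRootSums.
Variables (F : fieldType) (q : nat) (z : F).
Hypothesis z_prim : q.-primitive_root z.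

Lemma prim_root_neq0 : z != 0.
Proof. by rewrite (prim_root_eq0 z_prim) -lt0n (prim_order_gt0 z_prim). Qed.

Lemma prim_exprz_eq1 (m : int) : (z ^ m == 1) = (q%:Z %| m)%Z.
Proof.
rewrite dvdzE; case: m => n; first by rewrite -exprnP (prim_order_dvd z_prim).
by rewrite NegzE -exprnN invr_eq1 (prim_order_dvd z_prim).
Qed.

Lemma sum_prim_exprz (m : int) :
  \sum_(j < q) z ^ (j%:Z * m) = q%:R * delta_mod q m.
Proof.
rewrite /delta_mod -prim_exprz_eq1.
under eq_bigr do rewrite mulrC -exprz_exp -exprnP.
have [->|zm_neq1] := eqVneq (z ^ m) 1.
  by rewrite mulr1; under eq_bigr do rewrite expr1n; rewrite sumr_const card_ord.
rewrite mulr0.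
have zmq : (z ^ m) ^+ q = 1.
  by rewrite exprnP exprz_exp mulrC -exprz_exp -exprnP (prim_expr_order z_prim) exp1rz.
have /esym/eqP := subrX1 (z ^ m) q.
by rewrite zmq subrr mulf_eq0 subr_eq0 (negbTE zm_neq1) => /eqP.
Qed.

Lemma sum2_prim_exprz (m1 m2 c : int) :
  \sum_(k < q) \sum_(l < q) q%:R^-2 * z ^ (k%:Z * m1 + l%:Z * m2 + c)
  = z ^ c * delta_mod q m1 * delta_mod q m2.
Proof.
have q_neq0 : q%:R != 0 :> F := prim_root_natf_neq0 z_prim.
have zD (m n : int) : z ^ (m + n) = z ^ m * z ^ n := expfzDr m n prim_root_neq0.
have -> : z ^ c * delta_mod q m1 * delta_mod q m2 =
    q%:R^-2 * z ^ c * (q%:R * delta_mod q m1) * (q%:R * delta_mod q m2) by field.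
rewrite -!sum_prim_exprz -mulrA big_distrlr mulr_sumr; apply: eq_bigr => k _.
by rewrite mulr_sumr; apply: eq_bigr => l _ /=; rewrite !zD; ring.
Qed.

End PrimitiveRootSums.

Section ProductBasis.
Variables (R : realType) (q : nat).
Local Notation C := R[i].
Local Notation Mq := 'M[C]_(q * q).

Lemma pair_of_idx (i a : 'I_q) : pair_of (idx i a) = (i, a).
Proof. by rewrite /pair_of /idx /mxvec_index cast_ordK enum_rankK. Qed.

Lemma idx_pair_of (x : 'I_(q * q)) : idx (pair_of x).1 (pair_of x).2 = x.
Proof.
by rewrite /pair_of /idx /mxvec_index -surjective_pairing enum_valK cast_ordKV.
Qed.

Lemma eq_idx (i a j b : 'I_q) : (idx i a == idx j b) = (i == j) && (a == b).
Proof.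
apply/eqP/andP => [/(congr1 (@pair_of q))|[/eqP -> /eqP ->]] //.
by rewrite !pair_of_idx => -[-> ->].
Qed.

Lemma mx4E f (i a j b : 'I_q) : mx4 f (idx i a) (idx j b) = f i a j b :> C.
Proof. by rewrite /mx4 mxE !pair_of_idx. Qed.

Lemma sum_idx (F : 'I_(q * q) -> C) :
  \sum_x F x = \sum_(i < q) \sum_(a < q) F (idx i a).
Proof.
rewrite pair_bigA (reindex (fun p : 'I_q * 'I_q => idx p.1 p.2)) //=.
exists (@pair_of q) => [p _|x _]; last exact: idx_pair_of.
by rewrite pair_of_idx -surjective_pairing.
Qed.

Lemma matrix_idx_ext (A B : Mq) :
  (forall i a j b, A (idx i a) (idx j b) = B (idx i a) (idx j b)) -> A = B.
Proof.
by move=> eqAB; apply/matrixP => x y; rewrite -(idx_pair_of x) -(idx_pair_of y) eqAB.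
Qed.

Lemma mulmx_idxE (A B : Mq) i a j b :
  (A *m B) (idx i a) (idx j b) =
  \sum_(k < q) \sum_(c < q) A (idx i a) (idx k c) * B (idx k c) (idx j b).
Proof. by rewrite mxE sum_idx. Qed.

Lemma scalar1_idxE (i a j b : 'I_q) :
  (1%:M : Mq) (idx i a) (idx j b) = ((i == j) && (a == b))%:R.
Proof. by rewrite mxE eq_idx. Qed.

Lemma mxtrace_idxE (A : Mq) :
  \tr A = \sum_(i < q) \sum_(a < q) A (idx i a) (idx i a).
Proof. exact: sum_idx. Qed.

Lemma realign_idxE (X : Mq) b a j i :
  realign X (idx b a) (idx j i) = X (idx i a) (idx j b).
Proof. exact: mx4E. Qed.

Lemma ptrans2_idxE (X : Mq) i b j a :
  ptrans2 X (idx i b) (idx j a) = X (idx i a) (idx j b).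
Proof. exact: mx4E. Qed.

Lemma swap_idxE i a j b : swap R q (idx i a) (idx j b) = ((i == b) && (a == j))%:R.
Proof. exact: mx4E. Qed.

End ProductBasis.

Section Unitary.
Variable R : realType.
Local Notation C := R[i].

Lemma adjE m n (A : 'M[C]_(m, n)) x y : adj A x y = conjc (A y x).
Proof. by rewrite !mxE. Qed.

Lemma unitaryE n (A : 'M[C]_n) : unitary A <-> A *m adj A = 1%:M.
Proof. by split=> [[]//|AA1]; split=> //; apply: mulmx1C. Qed.

Lemma unitary_idxP q (A : 'M[C]_(q * q)) :
  unitary A <-> forall i a j b,
    \sum_(k < q) \sum_(c < q) A (idx i a) (idx k c) * conjc (A (idx j b) (idx k c))
    = ((i == j) && (a == b))%:R.
Proof.
rewrite unitaryE; split=> [AA1 i a j b|gram].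
  rewrite -scalar1_idxE -AA1 mulmx_idxE.
  by apply: eq_bigr => k _; apply: eq_bigr => c _; rewrite adjE.
apply: matrix_idx_ext => i a j b; rewrite mulmx_idxE scalar1_idxE -gram.
by apply: eq_bigr => k _; apply: eq_bigr => c _; rewrite adjE.
Qed.

End Unitary.

Section PartialTraces.
Variables (R : realType) (q : nat).
Local Notation C := R[i].
Local Notation Mq := 'M[C]_(q * q).

Lemma adj_mul_mulE (U B : Mq) x y :
  (adj U *m B *m U) x y = \sum_z \sum_z' conjc (U z x) * B z z' * U z' y.
Proof.
rewrite mxE; under eq_bigr do rewrite mxE mulr_suml.
by rewrite exchange_big; apply: eq_bigr => z _; apply: eq_bigr => z' _; rewrite adjE.
Qed.

Lemma ptr1_adj_tensorI (U : Mq) (a : 'M[C]_q) al be :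
  ptr1 (adj U *m tensorI a *m U) al be =
  \sum_(k < q) \sum_(l < q) a k l *
    (ptrans2 U *m adj (ptrans2 U)) (idx l be) (idx k al).
Proof.
rewrite mxE.
transitivity (\sum_(i < q) \sum_(k < q) \sum_(g < q) \sum_(l < q)
    conjc (U (idx k g) (idx i al)) * a k l * U (idx l g) (idx i be)).
  apply: eq_bigr => i _; rewrite adj_mul_mulE sum_idx; apply: eq_bigr => k _.
  apply: eq_bigr => g _; rewrite sum_idx; apply: eq_bigr => l _.
  rewrite -(sum_kron (fun d =>
    conjc (U (idx k g) (idx i al)) * a k l * U (idx l d) (idx i be)) g).
  by apply: eq_bigr => d _; rewrite mx4E; ring.
rewrite exchange_big; apply: eq_bigr => k _ /=.
under eq_bigr do rewrite exchange_big /=.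
rewrite exchange_big; apply: eq_bigr => l _ /=.
rewrite mulmx_idxE mulr_sumr; apply: eq_bigr => i _.
rewrite mulr_sumr; apply: eq_bigr => g _.
by rewrite adjE !ptrans2_idxE; ring.
Qed.

Lemma ptr2_adj_Itensor (U : Mq) (a : 'M[C]_q) i j :
  ptr2 (adj U *m Itensor a *m U) i j =
  \sum_(g < q) \sum_(d < q) a g d *
    (adj (ptrans2 U) *m ptrans2 U) (idx i g) (idx j d).
Proof.
rewrite mxE.
transitivity (\sum_(al < q) \sum_(k < q) \sum_(g < q) \sum_(d < q)
    conjc (U (idx k g) (idx i al)) * a g d * U (idx k d) (idx j al)).
  apply: eq_bigr => al _; rewrite adj_mul_mulE sum_idx; apply: eq_bigr => k _.
  apply: eq_bigr => g _; rewrite sum_idx exchange_big; apply: eq_bigr => d _ /=.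
  rewrite -(sum_kron (fun l =>
    conjc (U (idx k g) (idx i al)) * a g d * U (idx l d) (idx j al)) k).
  by apply: eq_bigr => l _; rewrite mx4E; ring.
rewrite exchange_big; under eq_bigr do rewrite exchange_big.
rewrite exchange_big; apply: eq_bigr => g _ /=.
under eq_bigr do rewrite exchange_big.
rewrite exchange_big; apply: eq_bigr => d _ /=.
rewrite mulmx_idxE mulr_sumr; apply: eq_bigr => k _.
rewrite mulr_sumr; apply: eq_bigr => al _.
by rewrite adjE !ptrans2_idxE; ring.
Qed.

Lemma ptr1_adj_tensorI_unitary (U : Mq) (a : 'M[C]_q) :
  unitary (ptrans2 U) -> ptr1 (adj U *m tensorI a *m U) = \tr a *: 1%:M.
Proof.
move=> [TT1 _]; apply/matrixP => al be.
rewrite ptr1_adj_tensorI TT1 [RHS]mxE [1%:M al be]mxE mulr_suml.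
apply: eq_bigr => k _; rewrite -[RHS](sum_kron (fun l => a k l * (al == be)%:R) k).
apply: eq_bigr => l _.
by rewrite scalar1_idxE [l == k]eq_sym [be == al]eq_sym -mulnb natrM mulrCA.
Qed.

Lemma ptr2_adj_Itensor_unitary (U : Mq) (a : 'M[C]_q) :
  unitary (ptrans2 U) -> ptr2 (adj U *m Itensor a *m U) = \tr a *: 1%:M.
Proof.
move=> [_ T'T1]; apply/matrixP => i j.
rewrite ptr2_adj_Itensor T'T1 [RHS]mxE [1%:M i j]mxE mulr_suml.
apply: eq_bigr => g _; rewrite -[RHS](sum_kron (fun d => a g d * (i == j)%:R) g).
by apply: eq_bigr => d _; rewrite scalar1_idxE andbC -mulnb natrM mulrCA.
Qed.

Lemma nontriv_eigenvalue_eq0 (M : 'M[C]_q -> 'M[C]_q) lam :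
  (forall a, \tr a = 0 -> M a = 0) -> nontriv_eigenvalue M lam -> lam = 0.
Proof.
move=> M0 [a [a_neq0 tr_a /esym]]; rewrite M0 // => /eqP.
by rewrite scaler_eq0 (negbTE a_neq0) orbF => /eqP.
Qed.

Lemma Mplus_traceless (U : Mq) (a : 'M[C]_q) :
  unitary (ptrans2 U) -> \tr a = 0 -> Mplus U a = 0.
Proof.
move=> T_unitary tr_a.
by rewrite /Mplus ptr1_adj_tensorI_unitary // tr_a scale0r scaler0.
Qed.

Lemma Mminus_traceless (U : Mq) (a : 'M[C]_q) :
  unitary (ptrans2 U) -> \tr a = 0 -> Mminus U a = 0.
Proof.
move=> T_unitary tr_a.
by rewrite /Mminus ptr2_adj_Itensor_unitary // tr_a scale0r scaler0.
Qed.

End PartialTraces.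

Section EntanglingPower.
Variables (R : realType) (q : nat).
Local Notation C := R[i].
Local Notation Mq := 'M[C]_(q * q).
Local Notation S := (swap R q).

Lemma realign_swap : realign S = S.
Proof. by apply: matrix_idx_ext => b a j i; rewrite realign_idxE !swap_idxE eq_sym. Qed.

Lemma mulmx_swap_idxE (X : Mq) i a j b :
  (X *m S) (idx i a) (idx j b) = X (idx i a) (idx b j).
Proof.
rewrite mulmx_idxE -[RHS](sum_kron (fun k => X (idx i a) (idx k j)) b).
apply: eq_bigr => k _; rewrite -(sum_kron (fun c => X (idx i a) (idx k c)) j).
rewrite mulr_sumr; apply: eq_bigr => c _.
by rewrite swap_idxE -mulnb natrM [k == b]eq_sym [c == j]eq_sym; ring.
Qed.

Lemma swap_unitary : unitary S.
Proof.
have adj_swap : adj S = S.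
  apply: matrix_idx_ext => i a j b.
  by rewrite adjE !swap_idxE conjc_nat andbC [b == i]eq_sym [j == a]eq_sym.
apply/unitaryE; rewrite adj_swap; apply: matrix_idx_ext => i a j b.
by rewrite mulmx_swap_idxE swap_idxE scalar1_idxE.
Qed.

Lemma Ent_realign_unitary (X : Mq) :
  unitary (realign X) -> Ent X = 1 - q%:R^-4 * (q * q)%:R.
Proof. by move=> [XX1 _]; rewrite /Ent XX1 expr1n mxtrace1. Qed.

Lemma e_p_realign_unitary (U : Mq) :
  unitary (realign U) -> e_p U = Ent (U *m S) / Ent S.
Proof.
move=> RU_unitary; rewrite /e_p; have -> : Ent U = Ent S.
  rewrite (Ent_realign_unitary RU_unitary) Ent_realign_unitary // realign_swap.
  exact: swap_unitary.
by rewrite addrAC subrr add0r.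
Qed.

End EntanglingPower.

Section Expi.
Variable R : realType.
Local Notation C := R[i].

Lemma expi0 : expi 0 = 1 :> C.
Proof. by rewrite /expi cos0 sin0. Qed.

Lemma expiD (x y : R) : expi (x + y) = expi x * expi y.
Proof.
rewrite /expi; apply/eqP; rewrite eq_complex /= cosD sinD.
by apply/andP; split; apply/eqP; ring.
Qed.

Lemma expiN (x : R) : expi (- x) = (expi x)^-1.
Proof. by apply/esym/mulr1_eq; rewrite -expiD subrr expi0. Qed.

Lemma conjc_expi (x : R) : conjc (expi x) = expi (- x).
Proof. by rewrite /expi cosN sinN. Qed.

Lemma expi_mulz (x : R) (m : int) : expi (x * m%:~R) = expi x ^ m.
Proof.
have expi_muln n : expi (x * n%:R) = expi x ^+ n.
  by elim: n => [|n IHn]; rewrite ?mulr0 ?expi0 // -natr1 mulrDr mulr1 expiD IHn exprSr.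
case: m => n; first exact: expi_muln.
by rewrite NegzE mulrN expiN -exprnN expi_muln.
Qed.

Lemma conjc_expi_exprz (x : R) (m : int) : conjc (expi x ^ m) = expi x ^ (- m).
Proof. by rewrite -!expi_mulz conjc_expi rmorphN mulrN. Qed.

Lemma expi_neq1 (x : R) : 0 < x < pi *+ 2 -> expi x != 1.
Proof.
move=> /andP[x_gt0 x_lt2pi]; apply/negP => /eqP [cos_x _].
have : 0 < sin (x / 2).
  by apply: sin_gt0_pi; rewrite divr_gt0 //= ltr_pdivrMr // mulr_natr.
(* cos x = 1 - 2 sin (x/2)^2 < 1 *)
have := cos2Dsin2 (x / 2); have := cosD (x / 2) (x / 2).
rewrite -splitr cos_x; nra.
Qed.

End Expi.

Section RootOfUnity.
Variables (R : realType) (q : nat).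
Hypothesis q_gt0 : (0 < q)%N.
Local Notation C := R[i].

Definition zeta : C := expi (- (2 * pi / q%:R)).

Lemma zeta_exprz (m : int) : zeta ^ m = expi (- (2 * pi / q%:R) * m%:~R).
Proof. by rewrite expi_mulz. Qed.

Lemma zeta_prim : q.-primitive_root zeta.
Proof.
have q_neq0 : q%:R != 0 :> R by rewrite pnatr_eq0 -lt0n.
have zeta_expn n : zeta ^+ n = (expi (2 * pi * (n%:R / q%:R)))^-1.
  by rewrite exprnP zeta_exprz -expiN mulNr mulrA mulrAC.
have zeta_q : zeta ^+ q = 1.
  by rewrite zeta_expn divff // mulr1 mulr_natl /expi cos2pi sin2pi invr1.
have [m m_prim m_dvd] := prim_order_exists q_gt0 zeta_q.
suff /eqP <- : m == q by [].
rewrite eqn_leq (dvdn_leq q_gt0 m_dvd) leqNgt; apply/negP => m_lt.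
have m_gt0 := prim_order_gt0 m_prim.
move: (prim_expr_order m_prim); rewrite zeta_expn => /eqP; rewrite invr_eq1.
apply/negP/expi_neq1; have pi_gt0 := @pi_gt0 R.
have y_gt0 : 0 < m%:R / q%:R :> R by rewrite divr_gt0 ?ltr0n.
have y_lt1 : m%:R / q%:R < 1 :> R by rewrite ltr_pdivrMr ?ltr0n ?mul1r ?ltr_nat.
by rewrite mulr2n; apply/andP; split; nra.
Qed.

Lemma conjc_zeta_exprz (m : int) : conjc (zeta ^ m) = zeta ^ (- m).
Proof. exact: conjc_expi_exprz. Qed.

End RootOfUnity.

Section GateUC.
Variables (R : realType) (q : nat).
Hypothesis q_gt0 : (0 < q)%N.
Local Notation C := R[i].
Local Notation U := (U_C R q).
Local Notation S := (swap R q).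
Local Notation zeta := (zeta R q).
Local Notation delta := (@delta_mod C q).

Definition U_C_phase (k a j b : 'I_q) : int :=
  k%:Z * a%:Z + 2 * j%:Z * b%:Z - (k%:Z * b%:Z + j%:Z * a%:Z).

Lemma U_C_idxE k a j b : U (idx k a) (idx j b) = q%:R^-1 * zeta ^ U_C_phase k a j b.
Proof.
rewrite /U_C mx4E zeta_exprz /U_C_phase; congr (_ * expi (_ * _)).
by rewrite rmorphB /= !natrD !natrM !rmorphD !rmorphM.
Qed.

Lemma U_C_mul_conj i a k c i' a' k' c' :
  U (idx i a) (idx k c) * conjc (U (idx i' a') (idx k' c')) =
  q%:R^-2 * zeta ^ (U_C_phase i a k c - U_C_phase i' a' k' c').
Proof.
have q_neq0 : q%:R != 0 :> C by rewrite pnatr_eq0 -lt0n.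
rewrite !U_C_idxE rmorphM /= conjc_inv conjc_nat conjc_zeta_exprz.
by rewrite [in RHS]expfzDr ?(prim_root_neq0 (zeta_prim R q_gt0)); field.
Qed.

Lemma zeta_kron (c : int) (b1 b2 : bool) : (b1 -> b2 -> c = 0) ->
  zeta ^ c * b1%:R * b2%:R = (b1 && b2)%:R.
Proof. by case: b1 b2 => [] [] c0; rewrite ?mulr0 ?mul0r ?mulr1 // c0. Qed.

Lemma U_C_unitary : unitary U.
Proof.
apply/unitary_idxP => i a i' a'.
transitivity (zeta ^ (i%:Z * a%:Z - i'%:Z * a'%:Z) *
              delta (a'%:Z - a%:Z) * delta (i'%:Z - i%:Z)).
  rewrite -(sum2_prim_exprz (zeta_prim R q_gt0)); apply: eq_bigr => k _.
  apply: eq_bigr => c _; rewrite U_C_mul_conj /U_C_phase; congr (_ * zeta ^ _); ring.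
rewrite !delta_mod_ord [a' == a]eq_sym [i' == i]eq_sym zeta_kron 1?andbC //.
by move=> /eqP -> /eqP ->; rewrite subrr.
Qed.

Lemma realign_U_C_unitary : unitary (realign U).
Proof.
apply/unitary_idxP => b a b' a'.
transitivity (zeta ^ 0 * delta (2 * (b%:Z - b'%:Z) - (a%:Z - a'%:Z)) *
              delta ((a%:Z - a'%:Z) - (b%:Z - b'%:Z))).
  rewrite -(sum2_prim_exprz (zeta_prim R q_gt0)); apply: eq_bigr => j _.
  apply: eq_bigr => i _; rewrite !realign_idxE U_C_mul_conj /U_C_phase.
  by congr (_ * zeta ^ _); ring.
by rewrite expr0z mul1r -natrM mulnb dvdz_unimodular !dvdz_ord_sub.
Qed.

Lemma ptrans2_U_C_gram i b i' b' :
  \sum_(j < q) \sum_(a < q)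
    ptrans2 U (idx i b) (idx j a) * conjc (ptrans2 U (idx i' b') (idx j a)) =
  zeta ^ (i'%:Z * b'%:Z - i%:Z * b%:Z) *
  delta (2 * (b%:Z - b'%:Z)) * delta (i%:Z - i'%:Z).
Proof.
rewrite -(sum2_prim_exprz (zeta_prim R q_gt0)); apply: eq_bigr => j _.
apply: eq_bigr => a _; rewrite !ptrans2_idxE U_C_mul_conj /U_C_phase.
by congr (_ * zeta ^ _); ring.
Qed.

Lemma ptrans2_U_C_unitaryP : unitary (ptrans2 U) <-> odd q.
Proof.
rewrite unitary_idxP; split=> [gram|q_odd i b i' b']; last first.
  have /eqP g1 : coprime 2 q by rewrite coprime2n.
  have delta2 y : delta (2 * y) = delta y by rewrite /delta_mod dvdz_double g1 divn1.
  rewrite ptrans2_U_C_gram delta2 !delta_mod_ord zeta_kron 1?andbC //.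
  by move=> /eqP -> /eqP ->; rewrite subrr.
apply/negPn/negP => q_even.
have q_half : q = (q./2 * 2)%N by rewrite -[LHS]odd_double_half (negbTE q_even) -muln2.
have half_lt : (q./2 < q)%N by rewrite -divn2 ltn_Pdiv.
have half_gt0 : (0 < q./2)%N by move: q_gt0; rewrite {1}q_half muln_gt0 andbT.
have two_half : 2 * (q./2)%:Z = q%:Z by rewrite {2}q_half PoszM mulrC.
move: (gram (Ordinal q_gt0) (Ordinal q_gt0) (Ordinal q_gt0) (Ordinal half_lt)).
rewrite ptrans2_U_C_gram /= !mul0r !subrr expr0z mul1r sub0r mulrN two_half.
rewrite /delta_mod rpredN dvdzz dvdz0 mulr1 -(inj_eq val_inj) /= eq_sym gtn_eqF //.
by move/eqP; rewrite oner_eq0.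
Qed.

Lemma realign_U_C_swap_gram b a b' a' :
  (realign (U *m S) *m adj (realign (U *m S))) (idx b a) (idx b' a') =
  zeta ^ (b'%:Z * a'%:Z - b%:Z * a%:Z) *
  delta (2 * (b%:Z - b'%:Z)) * delta (a%:Z - a'%:Z).
Proof.
rewrite mulmx_idxE -(sum2_prim_exprz (zeta_prim R q_gt0)); apply: eq_bigr => j _.
apply: eq_bigr => i _; rewrite adjE !realign_idxE !mulmx_swap_idxE U_C_mul_conj //.
by rewrite /U_C_phase; congr (_ * zeta ^ _); ring.
Qed.

Lemma mxtrace_U_C_swap :
  \tr ((realign (U *m S) *m adj (realign (U *m S))) ^+ 2) = (gcdn 2 q * (q * q))%:R.
Proof.
set P := realign (U *m S) *m adj (realign (U *m S)).
have PP b a k c : P (idx b a) (idx k c) * P (idx k c) (idx b a) =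
    (a == c)%:R * delta (2 * (b%:Z - k%:Z)).
  rewrite !realign_U_C_swap_gram !delta_mod_ord [c == a]eq_sym.
  have -> : 2 * (k%:Z - b%:Z) = - (2 * (b%:Z - k%:Z)) by ring.
  have -> : b%:Z * a%:Z - k%:Z * c%:Z = - (k%:Z * c%:Z - b%:Z * a%:Z) by ring.
  rewrite -invr_expz delta_modN.
  set z := zeta ^ _; set d := delta _; set e := (a == c)%:R.
  have zK : z / z = 1 by rewrite divff ?expfz_neq0 ?(prim_root_neq0 (zeta_prim R q_gt0)).
  have dd : d * d = d by rewrite -natrM mulnb andbb.
  have ee : e * e = e by rewrite -natrM mulnb andbb.
  transitivity (z / z * (d * d) * (e * e)); first by ring.
  by rewrite zK dd ee mul1r mulrC.
rewrite expr2 -mulmxE mxtrace_idxE.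
transitivity (\sum_(b < q) \sum_(a < q) (gcdn 2 q)%:R : C).
  apply: eq_bigr => b _; apply: eq_bigr => a _.
  rewrite mulmx_idxE -(sum_delta_mod_double_sub _ b q_gt0); apply: eq_bigr => k _.
  by under eq_bigr do rewrite PP; rewrite sum_kron.
by rewrite !sumr_const !card_ord -mulrnA natrM mulr_natr.
Qed.

Lemma Ent_U_C_swap : Ent (U *m S) = 1 - q%:R^-4 * (gcdn 2 q * (q * q))%:R.
Proof. by rewrite /Ent mxtrace_U_C_swap. Qed.

End GateUC.

Lemma e_p_U_C (R : realType) (q : nat) : (1 < q)%N ->
  e_p (U_C R q) = ((q ^ 2)%:R - (gcdn 2 q)%:R) / ((q ^ 2)%:R - 1).
Proof.
move=> q_gt1; have q_gt0 := ltnW q_gt1.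
have q_neq0 : q%:R != 0 :> R[i] by rewrite pnatr_eq0 -lt0n.
have := sqrn_sub1_neq0 R[i] q_gt1.
rewrite (e_p_realign_unitary (realign_U_C_unitary R q_gt0)) Ent_U_C_swap //.
have RS_unitary : unitary (realign (swap R q)).
  by rewrite realign_swap; exact: swap_unitary.
rewrite (Ent_realign_unitary RS_unitary) natrX !natrM => q21.
by field; rewrite q21 q_neq0.
Qed.

Theorem mainTheorem7 (R : realType) (q : nat) (hq : (2 <= q)%N) :
  unitary (U_C R q) /\ dual_unitary (U_C R q) /\
  (odd q ->
     [/\ two_unitary (U_C R q), e_p (U_C R q) = 1,
         (forall lam, nontriv_eigenvalue (Mplus (U_C R q)) lam -> lam = 0) &
         (forall lam, nontriv_eigenvalue (Mminus (U_C R q)) lam -> lam = 0)]) /\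
  (~~ odd q ->
     ~ two_unitary (U_C R q) /\
     e_p (U_C R q) = ((q ^ 2)%:R - 2) / ((q ^ 2)%:R - 1)).
Proof.
have q_gt0 : (0 < q)%N := ltnW hq.
have U_unitary := U_C_unitary R q_gt0.
have RU_unitary := realign_U_C_unitary R q_gt0.
split=> //; split=> //; split=> [q_odd | q_even].
- have T_unitary : unitary (ptrans2 (U_C R q)) by apply/ptrans2_U_C_unitaryP.
  have /eqP g1 : coprime 2 q by rewrite coprime2n.
  split=> //.
  + by rewrite e_p_U_C // g1 divff ?sqrn_sub1_neq0.
  + by move=> lam; apply/nontriv_eigenvalue_eq0 => a; apply: Mplus_traceless.
  + by move=> lam; apply/nontriv_eigenvalue_eq0 => a; apply: Mminus_traceless.
- have g2 : gcdn 2 q = 2 by apply/gcdn_idPl; rewrite dvdn2.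
  split; last by rewrite e_p_U_C // g2.
  by case=> _ [_ /(ptrans2_U_C_unitaryP R q_gt0)]; rewrite (negbTE q_even).
Qed.
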